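(* Let $(\xi,\eta)\in\mathbb{R}^2$ be such that $1,\xi,\eta$ are linearly independent over $\mathbb{Q}$, $f(\xi,\eta)=0$ for some irreducible $f\in\mathbb{Q}[x,y]$ of degree $2$ with $f\notin\mathbb{Q}[x]$, and there is $\lambda>1/2$ such that for every sufficiently large $X\ge1$ the system $|x_0|\le X$, $|x_0\xi-x_1|\le X^{-\lambda}$, $|x_0\eta-x_2|\le X^{-\lambda}$ has a non-zero solution in $\mathbb{Z}^3$. Let $(\mathbf{x}_i)_{i\ge1}$ be a sequence of minimal points for $(\xi,\eta)$, $W_i=\langle\mathbf{x}_i,\mathbf{x}_{i+1}\rangle_{\mathbb{Q}}$, and $H(W_i)=\|\mathbf{x}_i\wedge\mathbf{x}_{i+1}\|_2$. Let $I$ be the set of indices $i\ge2$ such that $\mathbf{x}_{i-1},\mathbf{x}_i,\mathbf{x}_{i+1}$ are linearly independent over $\mathbb{Q}$. Then $I$ is infinite, and for any pair of consecutive elements $i<j$ of $I$ we have $W_i\neq W_j$ and $X_j\le H(W_i)H(W_j)$.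
   Context: For $\mathbf{x}=(x_0,x_1,x_2)\in\mathbb{Z}^3$ put $\delta(\mathbf{x})=\max\{|x_0\xi-x_1|,|x_0\eta-x_2|\}$. For $X\ge1$, $\Delta(X)$ is the minimum of $\delta(\mathbf{x})$ over all $\mathbf{x}\in\mathbb{Z}^3$ with $1\le x_0\le X$. Let $X_1=1<X_2<X_3<\cdots$ be the number $1$ together with the points of discontinuity of $\Delta$, in increasing order, and $\Delta_i=\Delta(X_i)$. A sequence of minimal points is a choice, for each $i\ge1$, of $\mathbf{x}_i=(x_{i,0},x_{i,1},x_{i,2})\in\mathbb{Z}^3$ with $x_{i,0}=X_i$ and $\delta(\mathbf{x}_i)=\Delta_i$. $\wedge$ denotes the cross product in $\mathbb{R}^3$ and $\|\cdot\|_2$ the Euclidean norm; consecutive elements of $I$ are taken in the natural order of $\mathbb{N}$. *)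

From HB Require Import structures.
From mathcomp Require Import all_boot all_order all_algebra.
From mathcomp Require Import mpoly.
From mathcomp Require Import classical_sets reals exp.
Set Implicit Arguments. Unset Strict Implicit. Unset Printing Implicit Defensive.
Import Order.TTheory GRing.Theory Num.Theory.
Local Open Scope classical_set_scope.
Local Open Scope ring_scope.

Definition Z3 := 'rV[int]_3.
Definition i0 : 'I_3 := @Ordinal 3 0 isT.
Definition i1 : 'I_3 := @Ordinal 3 1 isT.
Definition i2 : 'I_3 := @Ordinal 3 2 isT.
Definition cd (x : Z3) (k : 'I_3) : int := x ord0 k.

Section Defs.
Variable R : realType.

Definition delta (xi eta : R) (x : Z3) : R :=
  Num.max `|(cd x i0)%:~R * xi - (cd x i1)%:~R| `|(cd x i0)%:~R * eta - (cd x i2)%:~R|.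

Definition Delta (xi eta : R) (X : R) : R :=
  inf [set delta xi eta x | x in [set x : Z3 | (1 <= cd x i0)%R /\ (cd x i0)%:~R <= X]].

Definition disc_pt (f : R -> R) (t : R) : Prop :=
  1 <= t /\
  ~ (forall e : R, 0 < e -> exists2 d : R, 0 < d &
       forall s : R, 1 <= s -> `|s - t| < d -> `|f s - f t| < e).

Definition breakpoint_seq (xi eta : R) (Xs : nat -> R) : Prop :=
  Xs 1%N = 1 /\ (forall i, (1 <= i)%N -> Xs i < Xs i.+1) /\
  (forall t : R, (t = 1 \/ disc_pt (Delta xi eta) t) <-> exists2 i, (1 <= i)%N & Xs i = t).

Definition minimal_points (xi eta : R) (x : nat -> Z3) : Prop :=
  exists Xs : nat -> R, breakpoint_seq xi eta Xs /\
    forall i, (1 <= i)%N ->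
      (cd (x i) i0)%:~R = Xs i /\ delta xi eta (x i) = Delta xi eta (Xs i).

Definition Qlin_indep3 (xi eta : R) : Prop :=
  forall a b c : rat, ratr a + ratr b * xi + ratr c * eta = 0 -> [/\ a = 0, b = 0 & c = 0].

(* evaluation point (xi, eta) for polynomials in Q[x,y] = Q[X_0, X_1] *)
Definition pt2 (xi eta : R) : 'I_2 -> R := fun k => if val k == 0%N then xi else eta.

Definition uniform_exponent_gt (xi eta : R) (lam : R) : Prop :=
  exists X0 : R, forall X : R, 1 <= X -> X0 <= X ->
    exists x : Z3, x != 0 /\
      `|(cd x i0)%:~R| <= X /\
      `|(cd x i0)%:~R * xi - (cd x i1)%:~R| <= X `^ (- lam) /\
      `|(cd x i0)%:~R * eta - (cd x i2)%:~R| <= X `^ (- lam).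

End Defs.

Definition x_var : 'I_2 := @Ordinal 2 0 isT.

Definition irreducible_mpoly (f : {mpoly rat[2]}) : Prop :=
  f != 0 /\ f \isn't a GRing.unit /\
  forall g h : {mpoly rat[2]}, f = g * h -> g \is a GRing.unit \/ h \is a GRing.unit.

Definition in_Qx (f : {mpoly rat[2]}) : Prop :=
  exists g : {poly rat}, f = (map_poly (@mpolyC 2 rat) g).['X_x_var].

Definition qv (x : Z3) : 'rV[rat]_3 := map_mx intr x.

(* cross product in Z^3 *)
Definition wedge (x y : Z3) : Z3 :=
  \row_(k < 3)
    (if val k == 0%N then cd x i1 * cd y i2 - cd x i2 * cd y i1
     else if val k == 1%N then cd x i2 * cd y i0 - cd x i0 * cd y i2
     else cd x i0 * cd y i1 - cd x i1 * cd y i0).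

Definition norm2 (R : realType) (w : Z3) : R :=
  Num.sqrt (\sum_(k < 3) ((cd w k)%:~R) ^+ 2).

(* W_i = <x_i, x_{i+1}>_Q, encoded by the 2x3 matrix with these rows (row space) *)
Definition Wsp (x : nat -> Z3) (i : nat) : 'M[rat]_(1 + 1, 3) :=
  col_mx (qv (x i)) (qv (x i.+1)).

Definition HW (R : realType) (x : nat -> Z3) (i : nat) : R := norm2 R (wedge (x i) (x i.+1)).

Definition in_I (x : nat -> Z3) (i : nat) : bool :=
  (2 <= i)%N &&
  row_free (col_mx (qv (x i.-1)) (col_mx (qv (x i)) (qv (x i.+1)))).

(* No integer point proportional to a minimal point x_k has a smaller positive first
   coordinate: it would approximate (xi, eta) strictly better, because delta is homogeneous and
   never vanishes when 1, xi, eta are Q-linearly independent.  Hence a_k = x_k /\ x_(k+1) is a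
   nonzero normal of W_k, and as long as no index of I occurs after p, the normal a_p stays
   orthogonal to every later x_k.  That cannot go on forever:
   |x_(k,0) (a_0 + a_1 xi + a_2 eta)| <= (|a_1| + |a_2|) delta(x_k) stays bounded while
   x_(k,0) grows, so I is infinite.  For consecutive i < j in I the normal a_i is orthogonal to
   x_(j-1) and x_j but not to x_(j+1), so W_i <> W_j; moreover a_i /\ a_j is a nonzero multiple
   t x_j with t an integer (by minimality again), so that
   X_j <= |x_j| <= |a_i /\ a_j| <= |a_i| |a_j| = H(W_i) H(W_j). *)

From HB Require Import structures.
From mathcomp Require Import all_boot all_order all_algebra.
From mathcomp Require Import mpoly.
From mathcomp Require Import boolp classical_sets reals exp.
From mathcomp Require Import ring zify.
Import Order.TTheory GRing.Theory Num.Theory.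
Set Implicit Arguments. Unset Strict Implicit. Unset Printing Implicit Defensive.
Local Open Scope ring_scope.

Lemma det_mx33 (R : comPzRingType) (A : 'M[R]_3) :
  \det A = A i0 i0 * (A i1 i1 * A i2 i2 - A i1 i2 * A i2 i1)
         - A i0 i1 * (A i1 i0 * A i2 i2 - A i1 i2 * A i2 i0)
         + A i0 i2 * (A i1 i0 * A i2 i1 - A i1 i1 * A i2 i0).
Proof.
rewrite (expand_det_row _ ord0) !big_ord_recl big_ord0 /cofactor.
rewrite !(expand_det_row _ ord0) !big_ord_recl big_ord0 /cofactor !det_mx11 !mxE.
pose a i j := A (inord i) (inord j).
have aE (i j : 'I_3) : A i j = a i j by rewrite /a !inord_val.
rewrite !aE; clearbody a; rewrite /bump /= !big_ord0; ring.
Qed.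

Definition dot (u v : Z3) : int := cd u i0 * cd v i0 + cd u i1 * cd v i1 + cd u i2 * cd v i2.
Definition triple (u v w : Z3) : int := dot u (wedge v w).

Lemma cd_wedge0 u v : cd (wedge u v) i0 = cd u i1 * cd v i2 - cd u i2 * cd v i1.
Proof. by rewrite /cd mxE. Qed.
Lemma cd_wedge1 u v : cd (wedge u v) i1 = cd u i2 * cd v i0 - cd u i0 * cd v i2.
Proof. by rewrite /cd mxE. Qed.
Lemma cd_wedge2 u v : cd (wedge u v) i2 = cd u i0 * cd v i1 - cd u i1 * cd v i0.
Proof. by rewrite /cd mxE. Qed.
Lemma cdB (u v : Z3) k : cd (u - v) k = cd u k - cd v k.
Proof. by rewrite /cd !mxE. Qed.
Lemma cdZ (t : int) (u : Z3) k : cd (t *: u) k = t * cd u k.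
Proof. by rewrite /cd !mxE. Qed.

Ltac vec_ring := rewrite /triple /dot ?(cd_wedge0, cd_wedge1, cd_wedge2); ring.

Lemma dotC u v : dot u v = dot v u. Proof. vec_ring. Qed.
Lemma dot_wedgeKl u v : dot u (wedge u v) = 0. Proof. vec_ring. Qed.
Lemma dot_wedgeKr u v : dot v (wedge u v) = 0. Proof. vec_ring. Qed.

Lemma lagrange_identity a b : dot (wedge a b) (wedge a b) + dot a b ^+ 2 = dot a a * dot b b.
Proof. vec_ring. Qed.

Lemma Z3_ext (u v : Z3) : cd u i0 = cd v i0 -> cd u i1 = cd v i1 -> cd u i2 = cd v i2 -> u = v.
Proof.
move=> e0 e1 e2; apply/rowP => -[[|[|[|//]]] hk]; [move: e0 | move: e1 | move: e2];
  by rewrite /cd (_ : ord0 = 0) //; congr (_ = _); congr (_ _ _); apply: val_inj.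
Qed.

Lemma cd0 k : cd 0 k = 0. Proof. by rewrite /cd mxE. Qed.

Lemma dot_self_ge0 u : 0 <= dot u u.
Proof. rewrite /dot; nia. Qed.

Lemma dot_self_eq0 u : (dot u u == 0) = (u == 0).
Proof.
apply/eqP/eqP => [h | ->]; last by rewrite /dot !cd0 !mulr0 !addr0.
by apply: Z3_ext; rewrite cd0; move: h; rewrite /dot; nia.
Qed.

Lemma sqr_cd0_le_dot u : cd u i0 ^+ 2 <= dot u u.
Proof. rewrite /dot; nia. Qed.

Lemma dotZZ t u : dot (t *: u) (t *: u) = t ^+ 2 * dot u u.
Proof. by rewrite /dot !cdZ; ring. Qed.

Lemma wedge_wedge a b w : wedge (wedge a b) w = dot a w *: b - dot b w *: a.
Proof. by apply: Z3_ext; rewrite !cdB !cdZ; vec_ring. Qed.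

Lemma wedge_wedge_orth a b w : dot a w = 0 -> dot b w = 0 -> wedge (wedge a b) w = 0.
Proof. by move=> ha hb; rewrite wedge_wedge ha hb !scale0r subr0. Qed.

Lemma wedge_eq0_dot a b y : wedge a b = 0 -> dot a a * dot b y = dot a b * dot a y.
Proof.
have expand : dot y (wedge (wedge a b) a) = dot a a * dot b y - dot a b * dot a y by vec_ring.
move=> ab0; apply/eqP; rewrite -subr_eq0 -expand ab0.
by rewrite /dot !cd_wedge0 !cd_wedge1 !cd_wedge2 !cd0 !(mul0r, mulr0, subr0, addr0).
Qed.

Lemma wedge_eq0_cd0 y w : wedge y w = 0 -> cd y i0 = 0 -> cd w i0 != 0 -> y = 0.
Proof.
move=> yw0 y0 w0; have := congr1 (cd^~ i1) yw0; have := congr1 (cd^~ i2) yw0.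
rewrite cd_wedge1 cd_wedge2 !cd0 y0 !mul0r sub0r subr0 => /eqP + /eqP.
rewrite oppr_eq0 !mulf_eq0 (negbTE w0) !orbF => /eqP y1 /eqP y2.
by apply: Z3_ext; rewrite cd0.
Qed.

Lemma orth_triple0 a u v w :
  a != 0 -> dot a u = 0 -> dot a v = 0 -> dot a w = 0 -> triple u v w = 0.
Proof.
move=> a0 hu hv hw.
have expand : triple u v w * dot a a = dot a u * dot a (wedge v w) + dot a v * dot a (wedge w u)
  + dot a w * dot a (wedge u v) by vec_ring.
move/eqP: expand; rewrite hu hv hw !mul0r !addr0 mulf_eq0 dot_self_eq0 (negbTE a0) orbF.
by move/eqP.
Qed.

Lemma orth_of_triple0 a u v w :
  wedge u v != 0 -> dot a u = 0 -> dot a v = 0 -> triple u v w = 0 -> dot a w = 0.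
Proof.
move=> uv0 hu hv huvw.
have expand : dot (wedge u v) (wedge u v) * dot a w =
  dot a (wedge u v) * triple u v w + dot a v * dot w (wedge (wedge u v) u)
  - dot a u * dot w (wedge (wedge u v) v) by vec_ring.
move/eqP: expand; rewrite hu hv huvw !mul0r mulr0 !addr0.
by rewrite mulf_eq0 dot_self_eq0 (negbTE uv0) => /eqP.
Qed.

Lemma qvE (u : Z3) k : qv u 0 k = (cd u k)%:~R.
Proof. by rewrite /qv mxE. Qed.

Lemma dot_wedge_submx (u v w : Z3) :
  (qv w <= col_mx (qv u) (qv v))%MS -> dot (wedge u v) w = 0.
Proof.
case/submxP=> D; rewrite -[D]hsubmxK mul_row_col.
move: (lsubmx D) (rsubmx D) => A B E.
have wE k : (cd w k)%:~R = A 0 0 * (cd u k)%:~R + B 0 0 * (cd v k)%:~R :> rat.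
  by rewrite -qvE E !mxE !big_ord1 !qvE.
apply: (@intr_inj rat); rewrite rmorph0 /dot !cd_wedge0 !cd_wedge1 !cd_wedge2.
by rewrite !(rmorphD, rmorphB, rmorphM) /= !wE; ring.
Qed.

Lemma row_free_qv3 (u v w : Z3) :
  row_free (col_mx (qv u) (col_mx (qv v) (qv w))) = (triple u v w != 0).
Proof.
set M := col_mx _ _; rewrite (row_free_unit (M : 'M_3)) unitmxE unitfE det_mx33.
have Mu k : M i0 k = (cd u k)%:~R.
  by rewrite (_ : i0 = lshift (1 + 1) (0 : 'I_1)) ?col_mxEu ?qvE //; apply: val_inj.
have Mv k : M i1 k = (cd v k)%:~R.
  rewrite (_ : i1 = rshift 1 (lshift 1 (0 : 'I_1))) ?col_mxEd ?col_mxEu ?qvE //.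
  exact: val_inj.
have Mw k : M i2 k = (cd w k)%:~R.
  by rewrite (_ : i2 = rshift 1 (rshift 1 (0 : 'I_1))) ?col_mxEd ?qvE //; apply: val_inj.
rewrite !Mu !Mv !Mw -(intr_eq0 rat) /triple /dot !cd_wedge0 !cd_wedge1 !cd_wedge2.
by rewrite !(rmorphD, rmorphB, rmorphM) /=; congr (~~ (_ == 0)); ring.
Qed.

Lemma in_I_triple (x : nat -> Z3) k :
  in_I x k = (2 <= k)%N && (triple (x k.-1) (x k) (x k.+1) != 0).
Proof. by rewrite /in_I row_free_qv3. Qed.

Lemma not_in_I_triple0 (x : nat -> Z3) k :
  (1 <= k)%N -> ~~ in_I x k.+1 -> triple (x k) (x k.+1) (x k.+2) = 0.
Proof. by move=> k1; rewrite in_I_triple ltnS k1 negbK => /eqP. Qed.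

Lemma norm2E (R : realType) (w : Z3) : norm2 R w = Num.sqrt (dot w w)%:~R.
Proof.
rewrite /norm2 /dot !big_ord_recl big_ord0 addr0 !(rmorphD, rmorphM) /= !expr2 addrA.
have -> : ord0 = i0 by apply: val_inj.
have -> : lift i0 ord0 = i1 by apply: val_inj.
by have -> : lift i0 (lift ord0 ord0) = i2 by apply: val_inj.
Qed.

Section Delta.
Variables (R : realType) (xi eta : R).

Lemma delta_ge0 y : 0 <= delta xi eta y.
Proof. by rewrite /delta le_max normr_ge0. Qed.

Lemma delta_gt0 y : Qlin_indep3 xi eta -> cd y i0 != 0 -> 0 < delta xi eta y.
Proof.
move=> indep y0; rewrite /delta lt_max normr_gt0 subr_eq0; apply/orP; left; apply/eqP => E.
have := indep (- (cd y i1)%:~R) (cd y i0)%:~R 0.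
rewrite rmorphN /= !ratr_int rmorph0 mul0r addr0 E addNr => /(_ erefl) [_ /eqP].
by rewrite intr_eq0 (negbTE y0).
Qed.

Lemma delta_wedge0 y w :
  wedge y w = 0 ->
  `|(cd w i0)%:~R| * delta xi eta y = `|(cd y i0)%:~R| * delta xi eta w :> R.
Proof.
move=> yw0; have := congr1 (cd^~ i1) yw0; have := congr1 (cd^~ i2) yw0.
rewrite cd_wedge1 cd_wedge2 !cd0 => /eqP + /eqP; rewrite !subr_eq0 => /eqP e1 /eqP e2.
rewrite /delta !maxr_pMr ?normr_ge0 // -!normrM !mulrBr !mulrA [_ * _%:~R in LHS]mulrC.
by rewrite -!intrM [cd w i0 * cd y i1]mulrC -e1 [cd w i0 * cd y i2]mulrC e2.
Qed.

Definition linform (a : Z3) : R := (cd a i0)%:~R + (cd a i1)%:~R * xi + (cd a i2)%:~R * eta.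

Lemma linform_neq0 a : Qlin_indep3 xi eta -> a != 0 -> linform a != 0.
Proof.
move=> indep a_neq0; apply/eqP => La.
have [] := indep (cd a i0)%:~R (cd a i1)%:~R (cd a i2)%:~R; first by rewrite !ratr_int.
move=> /eqP + /eqP + /eqP; rewrite !intr_eq0 => /eqP a0 /eqP a1 /eqP a2.
by move/eqP: a_neq0; apply; apply: Z3_ext; rewrite cd0.
Qed.

Lemma linform_bound a y : dot a y = 0 ->
  `|(cd y i0)%:~R * linform a| <= (`|(cd a i1)%:~R| + `|(cd a i2)%:~R|) * delta xi eta y.
Proof.
move=> ay0; set Y : R := (cd y i0)%:~R.
have -> : Y * linform a = (cd a i1)%:~R * (Y * xi - (cd y i1)%:~R)
                       + (cd a i2)%:~R * (Y * eta - (cd y i2)%:~R) + (dot a y)%:~R.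
  by rewrite /dot !(rmorphD, rmorphM) /= /linform /Y; ring.
rewrite ay0 addr0 mulrDl; apply: le_trans (ler_normD _ _) _.
rewrite !normrM; apply: lerD; apply: ler_wpM2l => //.
  by rewrite /delta le_max lexx.
by rewrite /delta le_max lexx orbT.
Qed.

End Delta.

Definition minimizing_seq {R : realType} (xi eta : R) (x : nat -> Z3) : Prop :=
  [/\ 1 <= cd (x 1%N) i0,
      forall k, (1 <= k)%N -> cd (x k) i0 < cd (x k.+1) i0 &
      forall k y, (1 <= k)%N -> 1 <= cd y i0 <= cd (x k) i0 ->
        delta xi eta (x k) <= delta xi eta y].

Lemma minimal_points_minimizing (R : realType) (xi eta : R) (x : nat -> Z3) :
  minimal_points xi eta x -> minimizing_seq xi eta x.
Proof.
move=> [Xs [[Xs1 [Xs_lt _]] x_Xs]]; split.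
- by rewrite -(ler_int R) (proj1 (x_Xs 1%N isT)) Xs1.
- move=> k k1; rewrite -(ltr_int R) (proj1 (x_Xs k k1)) (proj1 (x_Xs k.+1 (leqW k1))).
  exact: Xs_lt.
move=> k y k1 /andP[y1 yk]; rewrite (proj2 (x_Xs k k1)).
apply: ge_inf; first by exists 0 => _ [z _ <-]; apply: delta_ge0.
by exists y => //; split; rewrite // -(proj1 (x_Xs k k1)) ler_int.
Qed.

Section MinimalPoints.
Variables (R : realType) (xi eta : R) (x : nat -> Z3).
Hypothesis indep : Qlin_indep3 xi eta.
Hypothesis x_min : minimizing_seq xi eta x.

Lemma X_lt k : (1 <= k)%N -> cd (x k) i0 < cd (x k.+1) i0.
Proof. by case: x_min => _ + _; apply. Qed.

Lemma delta_minimal k y :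
  (1 <= k)%N -> 1 <= cd y i0 <= cd (x k) i0 -> delta xi eta (x k) <= delta xi eta y.
Proof. by case: x_min => _ _; apply. Qed.

Lemma index_le_X k : (1 <= k)%N -> k%:Z <= cd (x k) i0.
Proof.
case: x_min => X1 _ _; elim: k => [//|[_ _ //|k IH _]].
by have := X_lt (ltn0Sn k); move: (IH isT); lia.
Qed.

Lemma X_gt0 k : (1 <= k)%N -> 0 < cd (x k) i0.
Proof. by move=> k1; apply: (lt_le_trans _ (index_le_X k1)); rewrite ltz_nat. Qed.

Lemma X1_le_X k : (1 <= k)%N -> cd (x 1%N) i0 <= cd (x k) i0.
Proof.
elim: k => [//|[_ _ //|k IH _]].
exact: le_trans (IH isT) (ltW (X_lt (ltn0Sn k))).
Qed.

Lemma wedge_minimal_neq0 k y :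
  (1 <= k)%N -> 0 < cd y i0 < cd (x k) i0 -> wedge y (x k) != 0.
Proof.
move=> k1 /andP[y0 yk]; apply/eqP => yx0.
have dx_gt0 := delta_gt0 indep (lt0r_neq0 (X_gt0 k1)).
have dxy : delta xi eta (x k) <= delta xi eta y by apply: delta_minimal => //; lia.
have := delta_wedge0 xi eta yx0; rewrite !gtr0_norm ?ltr0z ?y0 ?(X_gt0 k1) // => scale.
have : (cd y i0)%:~R * delta xi eta (x k) < (cd (x k) i0)%:~R * delta xi eta (x k) :> R.
  by rewrite ltr_pM2r // ltr_int.
rewrite -scale ltNge => /negP; apply; apply: ler_wpM2l => //.
by rewrite ler0z (ltW (X_gt0 k1)).
Qed.

Lemma wedge_minimal_eq0 k z :
  (1 <= k)%N -> wedge z (x k) = 0 -> exists t : int, z = t *: x k.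
Proof.
move=> k1 zx0; set w := x k in zx0 *; have w0 : 0 < cd w i0 by apply: X_gt0.
set t := (cd z i0 %/ cd w i0)%Z; exists t.
set y := z - t *: w.
have yw0 : wedge y w = 0.
  by rewrite -zx0; apply: Z3_ext; rewrite !(cd_wedge0, cd_wedge1, cd_wedge2) !cdB !cdZ; ring.
have y0 : cd y i0 = (cd z i0 %% cd w i0)%Z.
  by rewrite cdB cdZ {1}(divz_eq (cd z i0) (cd w i0)); ring.
have [y_gt0 | y_le0] := ltP 0 (cd y i0).
  have : 0 < cd y i0 < cd w i0 by rewrite y_gt0 y0 ltz_pmod.
  by move/(wedge_minimal_neq0 k1); rewrite yw0 eqxx.
have y00 : cd y i0 = 0 by apply/eqP; rewrite eq_le y_le0 y0 modz_ge0 // lt0r_neq0.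
by have /eqP := wedge_eq0_cd0 yw0 y00 (lt0r_neq0 w0); rewrite subr_eq0 => /eqP.
Qed.

Lemma wedge_succ_neq0 k : (1 <= k)%N -> wedge (x k) (x k.+1) != 0.
Proof. by move=> k1; apply: wedge_minimal_neq0; rewrite ?(X_gt0 k1) ?X_lt // leqW. Qed.

Lemma orth_until_I p q :
  (1 <= p <= q)%N -> (forall m, (p < m <= q)%N -> ~~ in_I x m) ->
  dot (wedge (x p) (x p.+1)) (x q) = 0 /\ dot (wedge (x p) (x p.+1)) (x q.+1) = 0.
Proof.
elim: q => [|q IH]; first by case/andP; lia.
case/andP=> p1; rewrite leq_eqVlt => /orP[/eqP <- _ | pq notI].
  by rewrite dotC dot_wedgeKl dotC dot_wedgeKr.
have [xq xq1] : dot (wedge (x p) (x p.+1)) (x q) = 0 /\ dot (wedge (x p) (x p.+1)) (x q.+1) = 0.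
  by apply: IH => [|m hm]; [lia | apply: notI; lia].
have q1 : (1 <= q)%N by lia.
split => //; apply: orth_of_triple0 xq xq1 _; first exact: wedge_succ_neq0.
by apply: not_in_I_triple0 => //; apply: notI; lia.
Qed.

Lemma tail_not_in_plane a p :
  a != 0 -> ~ (forall q, (p <= q)%N -> dot a (x q) = 0).
Proof.
move=> a0 orth; set L := `|linform xi eta a|.
have L0 : 0 < L by rewrite normr_gt0 linform_neq0.
set C := (`|(cd a i1)%:~R| + `|(cd a i2)%:~R|) * delta xi eta (x 1%N).
have bounded q : (p <= q)%N -> (1 <= q)%N -> (cd (x q) i0)%:~R <= C / L.
  move=> pq q1; rewrite ler_pdivlMr // -[X in X * _]gtr0_norm ?ltr0z ?(X_gt0 q1) // -normrM.
  apply: le_trans (linform_bound xi eta (orth q pq)) _; apply: ler_wpM2l.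
    by rewrite addr_ge0.
  by apply: delta_minimal => //; rewrite X1_le_X // andbT; case: x_min.
have C0 : 0 <= C / L by rewrite divr_ge0 ?mulr_ge0 ?addr_ge0 ?delta_ge0 // ltW.
set q := (p + Num.bound (C / L)).+1.
have : C / L < (cd (x q) i0)%:~R.
  apply: lt_le_trans (archi_boundP C0) _; rewrite pmulrn ler_int.
  by apply: le_trans (index_le_X (ltn0Sn _)); rewrite lez_nat; lia.
by rewrite ltNge bounded //; lia.
Qed.

Lemma in_I_unbounded N : exists2 i, (N <= i)%N & in_I x i.
Proof.
have [//|noI] := pselect (exists2 i, (N <= i)%N & in_I x i).
exfalso; apply: (tail_not_in_plane (p := N.+1) (wedge_succ_neq0 (ltn0Sn N))) => q Nq.
have notI m : (N.+1 < m <= q)%N -> ~~ in_I x m.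
  by move=> hm; apply/negP => Im; apply: noI; exists m; lia.
by have [] // := @orth_until_I N.+1 q _ notI; lia.
Qed.

Section ConsecutiveIndices.
Variables i j : nat.
Hypotheses (Ii : in_I x i) (Ij : in_I x j) (ij : (i < j)%N).
Hypothesis gap : forall k, (i < k < j)%N -> ~~ in_I x k.

Let i_gt0 : (0 < i)%N. Proof. by case/andP: Ii; lia. Qed.
Let j_pos : (0 < j)%N. Proof. exact: leq_ltn_trans ij. Qed.

Lemma orth_consecutive_I :
  dot (wedge (x i) (x i.+1)) (x j.-1) = 0 /\ dot (wedge (x i) (x i.+1)) (x j) = 0.
Proof.
have [] := @orth_until_I i j.-1 _ (fun m hm => gap (k := m) (ltac:(lia))); first lia.
by rewrite prednK.
Qed.

Lemma triple_consecutive_I : triple (x j.-1) (x j) (x j.+1) != 0.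
Proof. by move: Ij; rewrite in_I_triple => /andP[]. Qed.

Lemma Wsp_consecutive_I_neq : ~~ (Wsp x i == Wsp x j)%MS.
Proof.
apply/negP => /andP[_]; rewrite col_mx_sub => /andP[_ /dot_wedge_submx xj1].
have [xj0 xj] := orth_consecutive_I.
move/eqP: triple_consecutive_I; apply.
exact: orth_triple0 (wedge_succ_neq0 i_gt0) xj0 xj xj1.
Qed.

Lemma X_le_HW_consecutive_I : (cd (x j) i0)%:~R <= HW R x i * HW R x j.
Proof.
have [xj0 xj] := orth_consecutive_I.
set a := wedge (x i) (x i.+1) in xj0 xj *; set b := wedge (x j) (x j.+1).
have ab0 : wedge a b != 0.
  apply/eqP => /(wedge_eq0_dot (x j.-1))/eqP; rewrite xj0 mulr0 mulf_eq0 dot_self_eq0.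
  by rewrite (negbTE (wedge_succ_neq0 i_gt0)) dotC (negbTE triple_consecutive_I).
have bxj : dot b (x j) = 0 by rewrite dotC dot_wedgeKl.
have [t abE] := wedge_minimal_eq0 j_pos (wedge_wedge_orth xj bxj).
have t2 : 1 <= t ^+ 2.
  have t0 : t != 0 by apply: contraNneq ab0 => t0; rewrite abE t0 scale0r.
  by rewrite -gtz0_ge1 lt0r sqrf_eq0 t0 sqr_ge0.
have Xj2 : cd (x j) i0 ^+ 2 <= dot a a * dot b b.
  have le_t2 : dot (x j) (x j) <= t ^+ 2 * dot (x j) (x j).
    by rewrite -[X in X <= _]mul1r ler_wpM2r ?dot_self_ge0.
  rewrite -lagrange_identity abE dotZZ (le_trans (sqr_cd0_le_dot _)) //.
  by rewrite (le_trans le_t2) // lerDl sqr_ge0.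
rewrite /HW !norm2E -/a -/b -sqrtrM ?ler0z ?dot_self_ge0 // -intrM.
have Xj0 : 0 <= (cd (x j) i0)%:~R :> R by rewrite ler0z (ltW (X_gt0 j_pos)).
rewrite -(ger0_norm Xj0) -sqrtr_sqr.
by apply: ler_wsqrtr; rewrite -rmorphXn ler_int.
Qed.

End ConsecutiveIndices.

End MinimalPoints.

Theorem lemma3p2 (R : realType) (xi eta : R) (x : nat -> Z3) :
  Qlin_indep3 xi eta ->
  (exists f : {mpoly rat[2]},
      irreducible_mpoly f /\ msize f = 3%N /\ ~ in_Qx f /\
      (map_mpoly (ratr : rat -> R) f).@[pt2 xi eta] = 0) ->
  (exists2 lam : R, 1 / 2 < lam & uniform_exponent_gt xi eta lam) ->
  minimal_points xi eta x ->
  (forall N : nat, exists2 i : nat, (N <= i)%N & in_I x i) /\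
  (forall i j : nat, in_I x i -> in_I x j -> (i < j)%N ->
     (forall k : nat, (i < k < j)%N -> ~~ in_I x k) ->
     ~~ (Wsp x i == Wsp x j)%MS /\
     ((cd (x j) i0)%:~R : R) <= HW R x i * HW R x j).
Proof.
move=> indep _ _ /minimal_points_minimizing x_min; split.
  exact: in_I_unbounded indep x_min.
move=> i j Ii Ij ij gap.
have W_neq := Wsp_consecutive_I_neq indep x_min Ii Ij ij gap.
have X_le_H := X_le_HW_consecutive_I indep x_min Ii Ij ij gap.
by split.
Qed.
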